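(* Let $A\subseteq\mathbb{R}^d$ be open, let $g:\mathbb{R}^d\to A$ be Lipschitz with constant $L_g$, and let $f:A\to\mathbb{R}^m$ be intrinsic Lipschitz (on $A$) with constant $L_f$. Then $f\circ g$ is intrinsic Lipschitz with constant $L_fL_g$.
   Context: Length of a continuous curve: $\ell(\gamma)=\sup\sum_{k}\|\gamma(t_k)-\gamma(t_{k-1})\|$ over partitions of $[0,1]$. Intrinsic metric on a set $S\subseteq\mathbb{R}^d$: $\rho(x,y)=\inf\{\ell(\gamma):\gamma:[0,1]\to S\text{ continuous from }x\text{ to }y\}$ ($\infty$ if no such curve). A map $h:S\to\mathbb{R}^m$ is intrinsic Lipschitz with constant $L$ if $\|h(x)-h(y)\|\le L\rho(x,y)$ for all $x,y\in S$. *)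

From HB Require Import structures.
From mathcomp Require Import all_boot all_order all_algebra.
From mathcomp Require Import all_classical all_reals.
From mathcomp Require Import ereal.
Set Implicit Arguments. Unset Strict Implicit. Unset Printing Implicit Defensive.
Import Order.TTheory GRing.Theory Num.Theory.
Local Open Scope ring_scope.
Local Open Scope classical_set_scope.

Definition enorm {R : realType} {n : nat} (v : 'rV[R]_n) : R :=
  Num.sqrt (\sum_(i < n) v 0 i ^+ 2).

Definition eopen {R : realType} {n : nat} (A : set 'rV[R]_n) : Prop :=
  forall x, A x -> exists2 r : R, 0 < r & forall y, enorm (y - x) < r -> A y.

(* continuity of a curve gamma on [0,1] (values outside [0,1] irrelevant) *)
Definition ccurve {R : realType} {n : nat} (gamma : R -> 'rV[R]_n) : Prop :=
  forall t, 0 <= t <= 1 -> forall eps : R, 0 < eps ->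
    exists2 delta : R, 0 < delta & forall s, 0 <= s <= 1 ->
      `|s - t| < delta -> enorm (gamma s - gamma t) < eps.

(* partitions 0 = t_0 <= t_1 <= ... <= t_k = 1, written as 0 :: q *)
Definition partition {R : realType} (q : seq R) : Prop :=
  sorted <=%R (0 :: q) /\ last 0 q = 1.

Definition partition_sum {R : realType} {n : nat} (gamma : R -> 'rV[R]_n)
  (q : seq R) : R :=
  \sum_(i < size q) enorm (gamma (nth 0 q i) - gamma (nth 0 (0 :: q) i)).

Definition curve_length {R : realType} {n : nat} (gamma : R -> 'rV[R]_n)
  : \bar R :=
  ereal_sup [set (partition_sum gamma q)%:E | q in [set q | partition q]].

(* intrinsic metric on S (+oo if no curve) *)
Definition intrinsic_dist {R : realType} {n : nat} (S : set 'rV[R]_n)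
  (x y : 'rV[R]_n) : \bar R :=
  ereal_inf [set curve_length gamma | gamma in
    [set gamma | ccurve gamma /\ gamma 0 = x /\ gamma 1 = y /\
                 (forall t, 0 <= t <= 1 -> S (gamma t))]].

(* intrinsic Lipschitz with constant L on S; the inequality is required
   whenever rho(x,y) is finite (it is vacuous when rho = +oo). *)
Definition intrinsic_lipschitz {R : realType} {n m : nat} (S : set 'rV[R]_n)
  (h : 'rV[R]_n -> 'rV[R]_m) (L : R) : Prop :=
  forall x y, S x -> S y -> (intrinsic_dist S x y < +oo)%E ->
    ((enorm (h x - h y))%:E <= L%:E * intrinsic_dist S x y)%E.

Definition lipschitz {R : realType} {n m : nat} (g : 'rV[R]_n -> 'rV[R]_m)
  (L : R) : Prop :=
  forall x y, enorm (g x - g y) <= L * enorm (x - y).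

From mathcomp Require Import all_boot all_order all_algebra.
From mathcomp Require Import all_classical all_reals.
From mathcomp Require Import ereal.
Import Order.TTheory GRing.Theory Num.Theory.
Local Open Scope ring_scope.
Local Open Scope classical_set_scope.

(* A Lipschitz map g sends every curve in its domain to a continuous curve at
   most Lg times as long, so it contracts intrinsic distances by Lg whenever
   it maps one set into another; composing with the intrinsic Lipschitz
   bound for f and taking the infimum over curves gives the constant Lf Lg. *)

Definition curve_in {R : realType} {n : nat} (S : set 'rV[R]_n)
  (x y : 'rV[R]_n) : set (R -> 'rV[R]_n) :=
  [set gamma | ccurve gamma /\ gamma 0 = x /\ gamma 1 = y /\
               (forall t, 0 <= t <= 1 -> S (gamma t))].

Lemma intrinsic_dist_le_curve_length {R : realType} {n : nat}
    (S : set 'rV[R]_n) x y (gamma : R -> 'rV[R]_n) :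
  curve_in S x y gamma -> (intrinsic_dist S x y <= curve_length gamma)%E.
Proof. by move=> Sgamma; apply: ereal_inf_lbound; exists gamma. Qed.

(* Infinite elements of [E] must be excluded from the hypothesis: for [c = 0]
   we would have [c * +oo = 0]. *)
Lemma le_mul_ereal_inf {R : realType} (E : set \bar R) (c M : R) :
  0 <= c -> (ereal_inf E < +oo)%E ->
  (forall e, E e -> (e < +oo)%E -> (M%:E <= c%:E * e)%E) ->
  (M%:E <= c%:E * ereal_inf E)%E.
Proof.
move=> c_ge0 infE_fin ME; have [c0|c_neq0] := eqVneq c 0.
  have [e Ee e_fin] := ereal_inf_lt infE_fin.
  by move: (ME e Ee e_fin); rewrite c0 !mul0e.
have c_gt0 : 0 < c by rewrite lt_neqAle eq_sym c_neq0.
rewrite -ereal_inf_pZl //.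
apply: le_ereal_inf_tmp => _ [e Ee <-].
have [e_fin|] := ltP e +oo%E; first exact: ME.
by rewrite leye_eq => /eqP ->; rewrite gt0_muley ?leey.
Qed.

Section lipschitz_curve.
Context {R : realType} {n m : nat} {g : 'rV[R]_n -> 'rV[R]_m} {L : R}.
Hypotheses (L_ge0 : 0 <= L) (g_lip : lipschitz g L).

Lemma lipschitz_ccurve (gamma : R -> 'rV[R]_n) :
  ccurve gamma -> ccurve (g \o gamma).
Proof.
move=> gamma_cont t t01 eps eps_gt0.
have L1_gt0 : 0 < L + 1 by rewrite ltr_wpDl.
have [delta delta_gt0 near_t] :=
  gamma_cont t t01 (eps / (L + 1)) (divr_gt0 eps_gt0 L1_gt0).
exists delta => // s s01 st_delta; apply: le_lt_trans (g_lip _ _) _.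
apply: (@le_lt_trans _ _ (L * (eps / (L + 1)))).
  exact/ler_wpM2l/ltW/near_t.
by rewrite mulrA ltr_pdivrMr // mulrDr mulr1 mulrC ltrDl.
Qed.

Lemma curve_length_lipschitz (gamma : R -> 'rV[R]_n) :
  (curve_length (g \o gamma) <= L%:E * curve_length gamma)%E.
Proof.
apply: ge_ereal_sup => _ [q q_part <-].
apply: (@le_trans _ _ (L * partition_sum gamma q)%:E).
  rewrite lee_fin /partition_sum mulr_sumr; apply: ler_sum => i _; exact: g_lip.
rewrite EFinM; apply: lee_wpmul2l; first by rewrite lee_fin.
by apply: ereal_sup_ubound; exists q.
Qed.

Lemma intrinsic_dist_lipschitz_le {S : set 'rV[R]_n} {C : set 'rV[R]_m}
    {x y} {gamma : R -> 'rV[R]_n} :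
  (forall z, S z -> C (g z)) -> curve_in S x y gamma ->
  (intrinsic_dist C (g x) (g y) <= L%:E * curve_length gamma)%E.
Proof.
move=> gSC [gamma_cont [gamma0 [gamma1 gammaS]]].
apply: le_trans (curve_length_lipschitz gamma).
apply: intrinsic_dist_le_curve_length; split; first exact: lipschitz_ccurve.
by rewrite /= gamma0 gamma1; split=> //; split=> // t /gammaS /gSC.
Qed.

End lipschitz_curve.

Theorem lemma3p9 (R : realType) (d m : nat) (A : set 'rV[R]_d)
  (g : 'rV[R]_d -> 'rV[R]_d) (f : 'rV[R]_d -> 'rV[R]_m) (Lg Lf : R) :
  eopen A ->
  (forall x, A (g x)) ->
  0 <= Lg -> lipschitz g Lg ->
  0 <= Lf -> intrinsic_lipschitz A f Lf ->
  intrinsic_lipschitz setT (f \o g) (Lf * Lg).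
Proof.
move=> _ gA Lg_ge0 g_lip Lf_ge0 f_lip x y _ _ rho_fin.
apply: le_mul_ereal_inf; [exact: mulr_ge0 | exact: rho_fin |].
move=> _ [gamma gamma_xy <-] length_fin.
have rhoA_le : (intrinsic_dist A (g x) (g y) <= Lg%:E * curve_length gamma)%E.
  exact: (intrinsic_dist_lipschitz_le Lg_ge0 g_lip (fun z _ => gA z) gamma_xy).
have rhoA_fin : (intrinsic_dist A (g x) (g y) < +oo)%E.
  by apply: le_lt_trans rhoA_le (lte_mul_pinfty _ _ length_fin); rewrite ?lee_fin.
apply: le_trans (f_lip _ _ (gA x) (gA y) rhoA_fin) _.
by rewrite EFinM -muleA; apply: lee_wpmul2l; rewrite ?lee_fin.
Qed.
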